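(* Let $G$ be a finite $p$-group whose commutator subgroup $D(G)$ equals its Frattini subgroup and is elementary abelian, $D(G)\cong(\mathbb Z/p\mathbb Z)^n$ with $n\ge1$. Let $\phi:G/D(G)\to\mathrm{Aut}(D(G))$ be the conjugation action $\phi(y)(g)=s(y)^{-1}gs(y)$ (for any lift $s(y)\in G$ of $y$), and fix an $\mathbb F_p$-basis $g_1,\dots,g_n$ of $D(G)$ in which each $\phi(y)$ is lower unitriangular: $\phi(y)(g_j)=g_j+\sum_{i>j}\ell_{i,j}(y)g_i$ with $\ell_{i,j}(y)\in\mathbb F_p$ (additive notation in $D(G)$). Then the following are equivalent: (1) $\Lambda_i(G)/\Lambda_{i-1}(G)\cong\mathbb Z/p\mathbb Z$ for every $i\in\{1,\dots,n\}$, so that $\{e\}=\Lambda_0(G)\subsetneq\Lambda_1(G)\subsetneq\dots\subsetneq\Lambda_n(G)=D(G)$; (2) for every $i\in\{1,\dots,n\}$, $\Lambda_i(G)$ is the $\mathbb F_p$-span of $g_{n-i+1},\dots,g_n$; (3) $n=1$, or $n\ge2$ and for every $i\in\{1,\dots,n-1\}$ the linear form $\ell_{i+1,i}:G/D(G)\to\mathbb F_p$ is nonzero.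
   Context: For a group $G$, define $\Lambda_0(G)=\{e\}$ and, for $i\ge1$, $\Lambda_i(G)=\pi_{i-1}^{-1}\big(Z(G/\Lambda_{i-1}(G))\cap D(G/\Lambda_{i-1}(G))\big)$ where $\pi_{i-1}:G\to G/\Lambda_{i-1}(G)$ is the canonical map, $Z$ denotes the center and $D$ the commutator subgroup. This gives an ascending chain of characteristic subgroups of $G$ contained in $D(G)$. Each $\ell_{i+1,i}$ is a group homomorphism $G/D(G)\to\mathbb F_p$. *)

From HB Require Import structures.
From mathcomp Require Import all_boot all_order all_algebra all_fingroup all_solvable.
Set Implicit Arguments. Unset Strict Implicit. Unset Printing Implicit Defensive.

Local Open Scope group_scope.

Fixpoint Lambda (gT : finGroupType) (G : {group gT}) (i : nat) : {group gT} :=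
  match i with
  | 0 => 1%G
  | i'.+1 =>
      (G :&: coset (Lambda G i') @*^-1
         ('Z(G / Lambda G i') :&: (G / Lambda G i')^`(1)))%G
  end.

(* The F_p-span (= generated subgroup, inside an elementary abelian p-group)
   of the elements g_a, g_{a+1}, ..., g_b (1-based nat indices). *)
Definition span_idx (gT : finGroupType) (g : nat -> gT) (a b : nat) : {set gT} :=
  <<[set g (val i) | i : 'I_b.+1 & a <= val i]>>.

From HB Require Import structures.
From mathcomp Require Import all_boot all_order all_algebra all_fingroup all_solvable.
Set Implicit Arguments. Unset Strict Implicit. Unset Printing Implicit Defensive.
Local Open Scope group_scope.

(* Write S_m for the span of g_m, ..., g_n.  The proof has three parts.
   - The chain: Lambda_(i+1) is the set of x in D with [x, G] in Lambda_i;
     when all factors up to D have order p, every G-invariant subgroup of D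
     is some Lambda_j, so G-invariant subgroups of D are determined by their
     orders.
   - The basis: since S_1 = D has order p ^ n, each S_m has order
     p ^ (n + 1 - m), each g_m has order p and meets S_(m+1) trivially
     (this replaces the linear independence hypothesis); triangularity gives
     [S_m, G] in S_(m+1), so each S_m is G-invariant.
   - The equivalences: (1) says |Lambda_i| = p ^ i; (2) gives these orders;
     (3) gives Lambda_i = S_(n+1-i) by induction, peeling off coordinates
     with the nonzero forms l_(j+1,j); and if some l_(j+1,j) vanished, the
     span of g_j, g_(j+2), ..., g_n would be a G-invariant subgroup of the
     same order as S_(j+1), hence equal to it under (1), a contradiction. *)

Lemma downward_ind (P : nat -> Prop) (b : nat) :
  P b -> (forall m, m < b -> P m.+1 -> P m) -> forall m, m <= b -> P m.
Proof.
move=> Pb step m le_mb; rewrite -(subKn le_mb).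
elim: (b - m)%N => [|d IHd]; first by rewrite subn0.
have [lt_db | le_bd] := ltnP d b.
  apply: step; last by rewrite subnSK.
  by rewrite ltn_subrL (leq_ltn_trans (leq0n d) lt_db).
have bd0 : (b - d = 0)%N by apply/eqP; rewrite subn_eq0.
have bd1 : (b - d.+1 = 0)%N by apply/eqP; rewrite subn_eq0 ltnW.
by rewrite bd1 -bd0.
Qed.

Lemma geometric_squeeze (f : nat -> nat) (p k : nat) : 0 < p ->
  (forall m, m < k -> f m <= p * f m.+1)%N -> f k <= 1 -> f 0 = (p ^ k)%N ->
  forall m, m <= k -> f m = (p ^ (k - m))%N.
Proof.
move=> p_gt0 step fk f0 m le_mk.
have up a d : a + d <= k -> (f a <= p ^ d * f (a + d))%N.
  elim: d => [|d IHd] le_adk; first by rewrite addn0 expn0 mul1n.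
  rewrite addnS in le_adk *; apply: leq_trans (IHd (ltnW le_adk)) _.
  by rewrite expnSr -mulnA leq_mul2l step ?orbT.
apply/eqP; rewrite eqn_leq; apply/andP; split.
  have := up m (k - m)%N; rewrite subnKC // => /(_ (leqnn k)) fm.
  by apply: leq_trans fm _; rewrite -[leqRHS]muln1 leq_mul2l fk orbT.
have := up 0 m le_mk; rewrite add0n f0 -{1}(subnKC le_mk) expnD.
by rewrite leq_mul2l expn_eq0 eqn0Ngt p_gt0.
Qed.

Lemma prime_index_intermediate (gT : finGroupType) (H K M : {group gT}) (p : nat) :
  prime p -> H \subset K -> K \subset M -> #|M| = (p * #|H|)%N ->
  K :=: H \/ K :=: M.
Proof.
move=> p_pr sHK sKM cardM.
have indexM : (#|K : H| * #|M : K|)%N = p.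
  apply/eqP; rewrite -(eqn_pmul2l (cardG_gt0 H)) mulnA (Lagrange sHK).
  by rewrite (Lagrange sKM) cardM mulnC.
have /(primeP p_pr).2 : #|K : H| %| p by rewrite -indexM dvdn_mulr.
case/orP=> /eqP iKH.
  by left; apply/eqP; rewrite eqEsubset sHK andbT -indexg_eq1 iKH.
right; apply/eqP; rewrite eqEsubset sKM /= -indexg_eq1.
by move: indexM; rewrite iKH -{2}[p]muln1 => /eqP; rewrite eqn_pmul2l ?prime_gt0.
Qed.

Lemma gen_setU1_abelian (gT : finGroupType) (A : {group gT}) x (B : {set gT}) :
  abelian A -> x \in A -> B \subset A -> <<x |: B>> = <[x]> * <<B>>.
Proof.
move=> cAA xA sBA; have sxA : <[x]> \subset A by rewrite cycle_subG.
have sBA' : <<B>> \subset A by rewrite gen_subG.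
rewrite -comm_joingE; last by apply: centC; apply: sub_abelian_cent2 cAA sxA sBA'.
by rewrite joing_idr /cycle joing_idl joingE.
Qed.

Section AbelianNormalCommutators.
Variables (gT : finGroupType) (A K : {group gT}).
Hypotheses (cAA : abelian A) (nAK : K \subset 'N(A)).

Lemma commMl_abelian x z y : x \in A -> z \in A -> y \in K ->
  [~ x * z, y] = [~ x, y] * [~ z, y].
Proof.
move=> xA zA yK; have xyA : [~ x, y] \in A.
  by rewrite commgEl groupM ?groupV // memJ_norm // (subsetP nAK).
by rewrite commMgJ conjgE -mulgA (centsP cAA _ xyA _ zA) -mulgA mulKg.
Qed.

Lemma commXl_abelian x y k : x \in A -> y \in K -> [~ x ^+ k, y] = [~ x, y] ^+ k.
Proof.
move=> xA yK; elim: k => [|k IHk]; first by rewrite !expg0 comm1g.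
by rewrite !expgS commMl_abelian ?groupX // IHk.
Qed.

End AbelianNormalCommutators.

Section LambdaChain.
Variables (gT : finGroupType) (G : {group gT}).
Local Notation D := (G^`(1)).
Local Notation L := (Lambda G).

Lemma Lambda_normal_sub i : L i <| G /\ L i \subset D.
Proof.
elim: i => [|i [nHG sHD]] /=; first by rewrite normal1 sub1G.
set H := Lambda G i; set Z := 'Z(G / H) :&: (G / H)^`(1).
have sZG : Z \subset G / H by rewrite subIset // center_sub.
have -> : G :&: coset H @*^-1 Z = coset H @*^-1 Z.
  apply/setIidPr; rewrite -(quotientGK nHG); exact: morphpreS.
split; first by rewrite -(quotientGK nHG) cosetpre_normal normalI ?center_normal ?der_normal.
apply: subset_trans (morphpreS _ (subsetIr _ _)) _.
rewrite -quotient_der ?normal_norm // quotientK ?(subset_trans (der_sub 1 G)) ?normal_norm //.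
by rewrite mulSGid.
Qed.

Lemma Lambda_norm i : G \subset 'N(L i).
Proof. exact: normal_norm (Lambda_normal_sub i).1. Qed.

Lemma mem_Lambda_succ i x :
  (x \in L i.+1) <-> (x \in D /\ forall y, y \in G -> [~ x, y] \in L i).
Proof.
have nLG := Lambda_norm i; have sDG : D \subset G := der_sub 1 G.
have centre_quo (X : {set gT}) : X \subset G ->
    (X / L i \subset 'C(G / L i)) = ([~: X, G] \subset L i).
  by move=> sXG; rewrite quotient_cents2 ?(subset_trans sXG).
split=> [Lx | [xD cx]].
  split; first exact: subsetP (Lambda_normal_sub i.+1).2 x Lx.
  move: Lx => /= /setIP [xG /morphpreP [xN /setIP [/setIP [_ cx] _]]] y yG.
  have : [set x] / L i \subset 'C(G / L i) by rewrite quotient_set1 // sub1set.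
  rewrite centre_quo ?sub1set // => /subsetP; apply.
  by apply: mem_commg; rewrite ?set11.
have xG : x \in G := subsetP sDG x xD.
have xN : x \in 'N(L i) := subsetP nLG x xG.
rewrite /= inE xG; apply/morphpreP; split => //.
rewrite inE -quotient_der // mem_quotient // andbT inE mem_quotient //=.
have : [set x] / L i \subset 'C(G / L i).
  rewrite centre_quo ?sub1set // gen_subG.
  by apply/subsetP => _ /imset2P [_ y /set1P -> yG ->]; apply: cx.
by rewrite quotient_set1 // sub1set.
Qed.

Lemma Lambda_subS i : L i \subset L i.+1.
Proof.
elim: i => [|i IHi]; first exact: sub1G.
apply/subsetP => x /mem_Lambda_succ [xD cx]; apply/mem_Lambda_succ.
by split=> // y yG; apply: (subsetP IHi); apply: cx.
Qed.

Lemma Lambda_sub a b : a <= b -> L a \subset L b.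
Proof.
move=> le_ab; rewrite -(subnKC le_ab).
elim: (b - a)%N => [|d IHd]; first by rewrite addn0.
by rewrite addnS (subset_trans IHd) ?Lambda_subS.
Qed.

Lemma Lambda_factor_isog p i : prime p ->
  (L i.+1 / L i \isog Zp p) <-> #|L i.+1| = (p * #|L i|)%N.
Proof.
move=> p_pr; have sLL := Lambda_subS i.
have card_factor : #|L i.+1 / L i| = #|L i.+1 : L i|.
  by rewrite card_quotient // (subset_trans (Lambda_normal_sub i.+1).2)
    ?(subset_trans (der_sub 1 G)) ?Lambda_norm.
rewrite -[#|L i.+1|](Lagrange sLL) -card_factor mulnC.
split=> [/card_isog -> | /eqP]; first by rewrite card_Zp ?prime_gt0.
rewrite eqn_pmul2r ?cardG_gt0 // => /eqP card_p.
by rewrite isog_cyclic_card ?prime_cyclic ?card_p // card_Zp ?prime_gt0 ?eqxx.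
Qed.

Lemma Lambda_factors_card p n : prime p ->
  (forall i, 1 <= i <= n -> L i / L i.-1 \isog Zp p) <->
  (forall i, i <= n -> #|L i| = (p ^ i)%N).
Proof.
move=> p_pr; split=> [factor_p | card_L].
  elim=> [|i IHi] lt_in; first by rewrite cards1.
  rewrite (Lambda_factor_isog i p_pr).1; last exact: factor_p i.+1 lt_in.
  by rewrite (IHi (ltnW lt_in)) expnS.
move=> i /andP [i_gt0 le_in]; have le_i1n := leq_trans (leq_pred i) le_in.
rewrite -(prednK i_gt0) /=; apply/(Lambda_factor_isog _ p_pr).
by rewrite (card_L _ le_i1n) (prednK i_gt0) (card_L _ le_in) -expnS prednK.
Qed.

Lemma Lambda_descend (V : {group gT}) j m z : G \subset 'N(V) -> j < m ->
  z \in V -> z \in L m -> z \notin L j ->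
  exists2 w, w \in V :&: L j.+1 & w \notin L j.
Proof.
move=> nVG; elim: m z => [//|m IHm] z lt_jm zV zL zNj.
have [le_mj | lt_jm'] := leqP m j.
  have eq_jm : j = m by apply/eqP; rewrite eqn_leq le_mj -ltnS lt_jm.
  by subst j; exists z; rewrite // inE zV zL.
have [zLm | zNm] := boolP (z \in L m); first exact: IHm z lt_jm' zV zLm zNj.
have [zD cz] := (mem_Lambda_succ m z).1 zL.
have [y yG zyN] : exists2 y, y \in G & [~ z, y] \notin L m.-1.
  apply/exists_inP; apply: contraR zNm => /exists_inPn cz'.
  rewrite -(ltn_predK lt_jm'); apply/mem_Lambda_succ; split=> // y yG.
  by apply/negPn; apply: cz'.
apply: (IHm [~ z, y] lt_jm').
- by rewrite commgEl groupM ?groupV // memJ_norm // (subsetP nVG).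
- exact: cz.
apply: contra zyN; apply: subsetP; apply: Lambda_sub.
by rewrite -ltnS (ltn_predK lt_jm').
Qed.

Section PrimeFactors.
Variables (p k : nat).
Hypotheses (p_pr : prime p) (card_D : #|D| = (p ^ k)%N).
Hypothesis card_Lambda : forall i, i <= k -> #|L i| = (p ^ i)%N.

Lemma normal_sub_der_Lambda (V : {group gT}) :
  G \subset 'N(V) -> V \subset D -> exists j, V :=: L j.
Proof.
move=> nVG sVD; have LkD : L k :=: D.
  by apply/eqP; rewrite eqEcard (Lambda_normal_sub k).2 card_D card_Lambda /=.
pose below j := (j <= k) && (L j \subset V).
have below0 : exists j, below j by exists 0%N; rewrite /below sub1G.
have below_k j : below j -> j <= k by case/andP.
have [j /andP [le_jk sLjV] max_j] := ex_maxnP below0 below_k.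
exists j; apply/eqP; rewrite eqEsubset sLjV andbT; apply/subsetP => z zV.
apply/negPn/negP => zNj.
have lt_jk : j < k.
  rewrite ltn_neqAle le_jk andbT; apply: contraNneq zNj => ->.
  by rewrite LkD (subsetP sVD).
have zLk : z \in L k by rewrite LkD (subsetP sVD).
have [w wVL wNj] := Lambda_descend nVG lt_jk zV zLk zNj.
have sLjK : L j \subset V :&: L j.+1 by rewrite subsetI sLjV Lambda_subS.
have card_Lj1 : #|L j.+1| = (p * #|L j|)%N by rewrite !card_Lambda // expnS.
have [eqK | eqK] := prime_index_intermediate p_pr sLjK (subsetIr _ _) card_Lj1.
  by move: wNj; rewrite -eqK wVL.
have : below j.+1 by rewrite /below lt_jk -eqK subsetIl.
by move/max_j; rewrite ltnn.
Qed.

Lemma normal_sub_der_eq (V W : {group gT}) :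
  G \subset 'N(V) -> V \subset D -> G \subset 'N(W) -> W \subset D ->
  #|V| = #|W| -> V :=: W.
Proof.
move=> nVG sVD nWG sWD cardVW.
have [a eqV] := normal_sub_der_Lambda nVG sVD.
have [b eqW] := normal_sub_der_Lambda nWG sWD.
rewrite eqV eqW in cardVW *.
have [le_ab | /ltnW le_ba] := leqP a b.
  by apply/eqP; rewrite eqEcard Lambda_sub // cardVW leqnn.
by apply/eqP; rewrite eq_sym eqEcard Lambda_sub // cardVW leqnn.
Qed.

End PrimeFactors.

End LambdaChain.

Section TriangularBasis.
Variables (gT : finGroupType) (G : {group gT}) (p n : nat)
  (g : nat -> gT) (l : nat -> nat -> gT -> 'F_p).
Hypotheses (p_pr : prime p) (abelem_D : p.-abelem (G^`(1))).
Hypotheses (card_D : #|G^`(1)| = (p ^ n)%N) (span_D : span_idx g 1 n = G^`(1)).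
Hypothesis conj_basis : forall y, y \in G -> forall j, 1 <= j <= n ->
  g j ^ y = g j * \prod_(j.+1 <= i < n.+1) (g i ^+ l i j y).

Local Notation D := (G^`(1)).

Definition tail_set m := [set g (val i) | i : 'I_n.+1 & m <= val i].
Local Notation S m := <<tail_set m>>.

Lemma tail_span1 : S 1 = D. Proof. exact: span_D. Qed.

Lemma abelian_D : abelian D. Proof. exact: abelem_abelian abelem_D. Qed.

Lemma mem_tail_span m i : m <= i <= n -> g i \in S m.
Proof.
case/andP=> le_mi le_in; apply/mem_gen/imsetP; exists (inord i).
  by rewrite inE /= inordK.
by rewrite /= inordK.
Qed.

Lemma tail_spanS m m' : m <= m' -> S m' \subset S m.
Proof.
move=> le_mm'; apply: genS; apply/subsetP => x /imsetP [i].
by rewrite inE => le_m'i ->; apply/imsetP; exists i; rewrite // inE (leq_trans le_mm').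
Qed.

Lemma tail_span_der m : 1 <= m -> S m \subset D.
Proof. by move=> m_gt0; rewrite -tail_span1 tail_spanS. Qed.

Lemma basis_der i : 1 <= i <= n -> g i \in D.
Proof. by move=> i_range; rewrite -tail_span1 mem_tail_span. Qed.

Lemma tail_span_top : S n.+1 = 1.
Proof.
rewrite -gen0; congr <<_>>; apply/setP => x; rewrite inE.
by apply/imsetP => -[i]; rewrite inE leqNgt ltn_ord.
Qed.

Lemma gen_basis_setU1 j m : 1 <= j <= n -> 1 <= m ->
  <<g j |: tail_set m>> = <[g j]> * S m.
Proof.
move=> j_range m_gt0; apply: gen_setU1_abelian abelian_D (basis_der j_range) _.
exact: subset_trans (subset_gen _) (tail_span_der m_gt0).
Qed.

Lemma tail_span_succ m : 1 <= m <= n -> S m = <[g m]> * S m.+1.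
Proof.
move=> m_range; rewrite -gen_basis_setU1 //; congr <<_>>.
apply/setP => x; rewrite !inE; apply/imsetP/predU1P.
  case=> i; rewrite inE leq_eqVlt => /predU1P [<- | lt_mi] ->; first by left.
  by right; apply/imsetP; exists i; rewrite ?inE.
have le_mn := (andP m_range).2.
case=> [-> | /imsetP [i]]; first by exists (inord m); rewrite ?inE /= inordK.
by rewrite inE => lt_mi ->; exists i; rewrite // inE ltnW.
Qed.

Lemma order_basis_le m : 1 <= m <= n -> #[g m] <= p.
Proof.
move/basis_der=> gD; have [-> | ntg] := eqVneq (g m) 1.
  by rewrite order1 prime_gt0.
by rewrite (abelem_order_p abelem_D gD ntg).
Qed.

(* The tail spans have the maximal possible orders p ^ (n + 1 - m), because
   each step adds at most a factor p and S_1 = D(G) has order p ^ n. *)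
Lemma card_tail_span m : 1 <= m <= n.+1 -> #|S m| = (p ^ (n.+1 - m))%N.
Proof.
case/andP=> m_gt0 le_mn; rewrite -(prednK m_gt0) subSS.
apply: (@geometric_squeeze (fun i => #|S i.+1|) p n (prime_gt0 p_pr)).
- move=> i lt_in; rewrite (tail_span_succ (m := i.+1)) //.
  have le_prod : (#|(<[g i.+1]> * S i.+2)%g| <= #|<[g i.+1]>| * #|S i.+2|)%N.
    by rewrite mul_cardG leq_pmulr ?cardG_gt0.
  apply: leq_trans le_prod _.
  by rewrite leq_mul2r -orderE order_basis_le ?orbT.
- by rewrite tail_span_top cards1.
- by rewrite tail_span1 card_D.
by rewrite -ltnS prednK.
Qed.

Lemma basis_order_TI m : 1 <= m <= n -> #[g m] = p /\ <[g m]> :&: S m.+1 = 1.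
Proof.
move=> m_range; have /andP [m_gt0 le_mn] := m_range.
have card_Sm1 : #|S m.+1| = (p ^ (n - m))%N by rewrite card_tail_span ?ltnS.
have card_Sm : #|S m| = (p * p ^ (n - m))%N.
  by rewrite card_tail_span ?m_gt0 ?(leqW le_mn) // subSn // expnS.
have := mul_cardG <[g m]> (S m.+1).
rewrite -tail_span_succ // card_Sm card_Sm1 -orderE mulnAC => /eqP.
rewrite eqn_pmul2r ?expn_gt0 ?prime_gt0 // => /eqP order_gm.
have card_TI : #|<[g m]> :&: S m.+1| = 1%N.
  apply/eqP; rewrite eqn_leq cardG_gt0 andbT.
  by rewrite -(leq_pmul2l (prime_gt0 p_pr)) muln1 -order_gm order_basis_le.
by rewrite order_gm card_TI muln1; split=> //; apply/eqP; rewrite trivg_card1 card_TI.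
Qed.

Lemma norm_D : G \subset 'N(D). Proof. exact: normal_norm (der_normal 1 G). Qed.

Lemma comm_basis m y : 1 <= m <= n -> y \in G ->
  [~ g m, y] = \prod_(m.+1 <= i < n.+1) g i ^+ l i m y.
Proof. by move=> m_range yG; rewrite commgEl conj_basis // mulKg. Qed.

Lemma prod_tail_mem m j (c : nat -> 'F_p) : m <= j ->
  \prod_(j <= i < n.+1) g i ^+ c i \in S m.
Proof.
move=> le_mj; rewrite big_seq; apply: group_prod => i.
rewrite mem_index_iota ltnS => /andP [le_ji le_in].
by rewrite groupX // mem_tail_span // le_in (leq_trans le_mj).
Qed.

Lemma comm_tail_span m y s : 1 <= m -> y \in G -> s \in S m -> [~ s, y] \in S m.+1.
Proof.
move=> m_gt0 yG; have [le_mn | lt_nm] := leqP m n.+1; last first.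
  move/(subsetP (tail_spanS (ltnW lt_nm))); rewrite tail_span_top => /set1P ->.
  by rewrite comm1g group1.
move: m le_mn m_gt0 s; apply: downward_ind.
  by move=> _ s; rewrite tail_span_top => /set1P ->; rewrite comm1g group1.
move=> m lt_mn IHm m_gt0 x.
rewrite tail_span_succ ?m_gt0 // => /mulsgP [_ s /cycleP [k ->] sS ->].
have gmD : g m \in D by rewrite basis_der ?m_gt0.
have sD : s \in D := subsetP (tail_span_der (ltn0Sn m)) s sS.
rewrite (commMl_abelian abelian_D norm_D) ?groupX // (commXl_abelian abelian_D norm_D) //.
rewrite groupM ?groupX ?comm_basis ?m_gt0 ?prod_tail_mem //.
exact: subsetP (tail_spanS (leqnSn _)) _ (IHm isT s sS).
Qed.

Lemma tail_span_norm m : 1 <= m -> G \subset 'N(S m).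
Proof.
move=> m_gt0; rewrite -commg_subl gen_subG; apply/subsetP => _ /imset2P [s y sS yG ->].
exact: subsetP (tail_spanS (leqnSn m)) _ (comm_tail_span m_gt0 yG sS).
Qed.

Lemma tail_span_peel j y x : 1 <= j < n -> y \in G -> l j.+1 j y != 0%R ->
  x \in S j -> [~ x, y] \in S j.+2 -> x \in S j.+1.
Proof.
case/andP=> j_gt0 lt_jn yG nz_l; have j_range : 1 <= j <= n by rewrite j_gt0 ltnW.
rewrite tail_span_succ // => /mulsgP [_ s /cycleP [k ->] sS ->].
have gjD := basis_der j_range.
have sD : s \in D := subsetP (tail_span_der (ltn0Sn j)) s sS.
rewrite (commMl_abelian abelian_D norm_D) ?groupX // (commXl_abelian abelian_D norm_D) //.
rewrite comm_basis // big_ltn ?ltnS //.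
set c := l j.+1 j y; set w := \prod_(_ <= _ < _) _.
have wS : w \in S j.+2 by apply: prod_tail_mem.
have cw : commute (g j.+1 ^+ c) w.
  by apply: (centsP abelian_D); rewrite ?groupX ?basis_der ?(subsetP (tail_span_der _) _ wS).
rewrite expgMn // -expgM -mulgA groupMr; last first.
  by rewrite groupM ?groupX // (comm_tail_span _ yG sS).
(* the g_(j+1)-coordinate c * k of the commutator must vanish mod p *)
have [order_gj1 TI_gj1] := basis_order_TI (m := j.+1) lt_jn.
move=> gck; have : g j.+1 ^+ (c * k) \in <[g j.+1]> :&: S j.+2 by rewrite inE mem_cycle.
rewrite TI_gj1 => /set1P /eqP; rewrite -order_dvdn order_gj1 Euclid_dvdM //.
case/orP=> [p_c | p_k].
  have c_lt_p : c < p by rewrite -[X in _ < X](card_Fp p_pr) card_ord ltn_ord.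
  by move: p_c nz_l; rewrite /dvdn modn_small // => /eqP c0; rewrite -val_eqE /= c0.
have [order_gj _] := basis_order_TI j_range.
by move: p_k; rewrite -order_gj order_dvdn => /eqP ->; rewrite mul1g.
Qed.

Definition subdiag_nonzero :=
  forall j, 1 <= j < n -> exists2 y, y \in G & l j.+1 j y != 0%R.

(* Under (3), an element of D whose commutators with G lie in S_(m+1)
   lies in S_m: peel off the coordinates g_1, ..., g_(m-1) one at a time. *)
Lemma mem_tail_span_comm m x : subdiag_nonzero -> 1 <= m <= n -> x \in D ->
  (forall y, y \in G -> [~ x, y] \in S m.+1) -> x \in S m.
Proof.
move=> nz /andP [m_gt0 le_mn] xD comm_x.
suff x_tails j : 1 <= j <= m -> x \in S j by apply: x_tails; rewrite m_gt0 leqnn.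
elim: j => [// | j IHj] /andP [_ le_j1m].
have [-> | j_gt0] := posnP j; first by rewrite tail_span1.
have j_range : 1 <= j < n by rewrite j_gt0 (leq_trans le_j1m le_mn).
have [y yG nz_l] := nz j j_range.
apply: (tail_span_peel j_range yG nz_l); first by rewrite IHj // j_gt0 ltnW.
have sub_S : S m.+1 \subset S j.+2 by rewrite tail_spanS.
exact: subsetP sub_S _ (comm_x y yG).
Qed.

Lemma Lambda_tail_span : subdiag_nonzero ->
  forall i, i <= n -> Lambda G i :=: S (n.+1 - i).
Proof.
move=> nz; elim=> [|i IHi] lt_in; first by rewrite subn0 tail_span_top.
have le_in := ltnW lt_in; have lo_gt0 : 0 < n - i by rewrite subn_gt0.
have eqLi : Lambda G i :=: S (n - i).+1 by rewrite IHi // subSn.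
rewrite subSS; apply/eqP; rewrite eqEsubset; apply/andP; split; apply/subsetP => x.
  case/mem_Lambda_succ=> xD comm_x; apply: mem_tail_span_comm => //.
    by rewrite lo_gt0 leq_subr.
  by move=> y yG; rewrite -eqLi comm_x.
move=> xS; apply/mem_Lambda_succ; split; first exact: subsetP (tail_span_der lo_gt0) x xS.
by move=> y yG; rewrite eqLi comm_tail_span.
Qed.

Lemma card_Lambda_of_span :
  (forall i, 1 <= i <= n -> Lambda G i :=: span_idx g (n - i + 1) n) ->
  forall i, i <= n -> #|Lambda G i| = (p ^ i)%N.
Proof.
move=> eqL [|i] le_in; first by rewrite cards1.
rewrite eqL // card_tail_span ?addn1 ?ltnS ?leq_subr // subSS subKn //.
Qed.

Local Notation gap j := <<g j |: tail_set j.+2>>.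

Lemma gap_norm j : 1 <= j < n -> (forall y, y \in G -> l j.+1 j y = 0%R) ->
  G \subset 'N(gap j).
Proof.
case/andP=> j_gt0 lt_jn l0; have j_range : 1 <= j <= n by rewrite j_gt0 ltnW.
have sSgap : S j.+2 \subset gap j by apply: genS; apply: subsetUr.
rewrite -commg_subl gen_subG; apply/subsetP => _ /imset2P [b y b_gap yG ->].
have : b \in gap j := b_gap.
rewrite gen_basis_setU1 // => /mulsgP [_ s /cycleP [k ->] sS ->].
apply: (subsetP sSgap); have sD : s \in D := subsetP (tail_span_der (ltn0Sn j.+1)) s sS.
rewrite (commMl_abelian abelian_D norm_D) ?groupX ?basis_der //.
rewrite (commXl_abelian abelian_D norm_D) ?basis_der // comm_basis //.
rewrite big_ltn ?ltnS // l0 // expg0 mul1g groupM ?groupX ?prod_tail_mem //.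
exact: subsetP (tail_spanS (leqnSn _)) _ (comm_tail_span (ltn0Sn j.+1) yG sS).
Qed.

Lemma card_gap j : 1 <= j < n -> #|gap j| = #|S j.+1|.
Proof.
case/andP=> j_gt0 lt_jn; have j_range : 1 <= j <= n by rewrite j_gt0 ltnW.
have [order_gj TI_gj] := basis_order_TI j_range.
have TI_gap : <[g j]> :&: S j.+2 = 1.
  by apply/trivgP; rewrite -TI_gj setIS // tail_spanS.
rewrite gen_basis_setU1 // TI_cardMg // -orderE order_gj.
rewrite (card_tail_span (m := j.+2)) // (card_tail_span (m := j.+1)); last exact: ltnW lt_jn.
by rewrite !subSS -expnS (subnSK lt_jn).
Qed.

(* (1) => (3): if all factors have order p, the G-invariant subgroups of D are
   determined by their orders, so a vanishing l_(j+1,j) would force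
   gap_j = S_(j+1) and hence g_j in S_(j+1). *)
Lemma subdiag_nonzero_of_card :
  (forall i, i <= n -> #|Lambda G i| = (p ^ i)%N) -> subdiag_nonzero.
Proof.
move=> card_L j j_range; have [j_gt0 lt_jn] := andP j_range.
have j_range' : 1 <= j <= n by rewrite j_gt0 ltnW.
apply/exists_inP; apply: contraT => /exists_inPn l0.
have gap_eq : gap j :=: S j.+1.
  apply: (normal_sub_der_eq p_pr card_D card_L) (card_gap j_range).
  - by apply: gap_norm => // y yG; apply/eqP; apply: negbNE; apply: l0.
  - by rewrite gen_subG subUset sub1set basis_der // (subset_trans (subset_gen _)) ?tail_span_der.
  - exact: tail_span_norm.
  - exact: tail_span_der.
have [order_gj TI_gj] := basis_order_TI j_range'.
have : g j \in <[g j]> :&: S j.+1 by rewrite inE cycle_id -gap_eq mem_gen ?setU11.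
rewrite TI_gj => /set1P gj1; move: (prime_gt1 p_pr).
by rewrite -order_gj gj1 order1.
Qed.

(* Condition (3) of the theorem is subdiag_nonzero, with n = 1 as the case
   where it is vacuous. *)
Lemma subdiag_nonzeroE : 0 < n ->
  subdiag_nonzero <-> (n = 1%N \/
    ((2 <= n)%N /\
     forall i, (1 <= i <= n.-1)%N -> exists2 y, y \in G & l i.+1 i y != 0%R)).
Proof.
move=> n_gt0; split=> [nz | cond3 j /andP [j_gt0 lt_jn]].
  have [n_le1 | n_ge2] := leqP n 1; first by left; apply/eqP; rewrite eqn_leq n_le1.
  right; split=> // i /andP [i_gt0 le_in1]; apply: nz.
  by rewrite i_gt0 -(prednK n_gt0) ltnS.
case: cond3 => [n1 | [_ nz]]; first by move: lt_jn; rewrite n1 ltnNge j_gt0.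
by apply: nz; rewrite j_gt0 -ltnS prednK.
Qed.

Lemma Lambda_span_idx : subdiag_nonzero ->
  forall i, 1 <= i <= n -> Lambda G i :=: span_idx g (n - i + 1) n.
Proof. by move=> nz i /andP [_ le_in]; rewrite Lambda_tail_span // subSn // addn1. Qed.

End TriangularBasis.

Theorem proposition5p2 (gT : finGroupType) (G : {group gT}) (p n : nat)
    (g : nat -> gT) (l : nat -> nat -> gT -> 'F_p) :
  prime p ->
  p.-group G ->
  G^`(1) = 'Phi(G) ->
  p.-abelem (G^`(1)) ->
  #|G^`(1)| = (p ^ n)%N ->
  (1 <= n)%N ->
  (* g_1, ..., g_n is an F_p-basis of D(G): spanning ... *)
  span_idx g 1 n = G^`(1) ->
  (* ... and linearly independent *)
  (forall a : nat -> 'F_p,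
      \prod_(1 <= i < n.+1) (g i ^+ a i) = 1 ->
      forall i, (1 <= i <= n)%N -> a i = 0%R) ->
  (* lower unitriangular conjugation action:
     phi(y)(g_j) = g_j + sum_{i>j} l_{i,j}(y) g_i  (multiplicatively) *)
  (forall y, y \in G -> forall j, (1 <= j <= n)%N ->
      g j ^ y = g j * \prod_(j.+1 <= i < n.+1) (g i ^+ l i j y)) ->
  [<-> (* (1) *)
       (forall i, (1 <= i <= n)%N -> (Lambda G i / Lambda G i.-1) \isog Zp p);
       (* (2) *)
       (forall i, (1 <= i <= n)%N -> (Lambda G i :=: span_idx g (n - i + 1) n));
       (* (3) *)
       (n = 1%N \/
        ((2 <= n)%N /\
         forall i, (1 <= i <= n.-1)%N -> exists2 y, y \in G & l i.+1 i y != 0%R))].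
Proof.
move=> p_pr _ _ abelem_D card_D n_gt0 span_D _ conj_basis.
have factors_card := Lambda_factors_card G n p_pr.
have card_of_span := card_Lambda_of_span p_pr abelem_D card_D span_D.
have subdiag_of_card := subdiag_nonzero_of_card p_pr abelem_D card_D span_D conj_basis.
have span_of_subdiag := Lambda_span_idx p_pr abelem_D card_D span_D conj_basis.
have cond3 := subdiag_nonzeroE G l n_gt0.
tfae=> [factors | spans | subdiag].
- by apply/span_of_subdiag/subdiag_of_card/factors_card.
- by apply/cond3/subdiag_of_card/card_of_span.
- by apply/factors_card/card_of_span/span_of_subdiag/cond3.
Qed.
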